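(* In the setting described in the context, writing $\alpha_V,\alpha_A,\boldsymbol\Delta_V,\boldsymbol\Delta_A,\mathbf{h}_{\mathbf{V}}=\mathbf{h}_{\mathbf{V},\tau},\mathbf{h}_{\mathbf{A}}=\mathbf{h}_{\mathbf{A},\tau}$ for quantities at time $\tau$, and $c_A=1-\eta_AK_P\alpha_V^2-\eta_A\|\boldsymbol\Delta_V\|_\mu^2$, $c_V=1-\eta_V(\alpha_A^2K_Q+1/T)-\eta_V\|\boldsymbol\Delta_A\|_\mu^2$, $$\|\boldsymbol\Delta_{\mathbf{A},\tau+1}\|_\mu^2=c_A^2\|\boldsymbol\Delta_{\mathbf{A}}\|_\mu^2-2\eta_Ac_A\langle\boldsymbol\Delta_{\mathbf{A}},\mathbf{h}_{\mathbf{A}}\rangle_\mu-\frac{\eta_A^2}{K_Q}\langle\mathbf{h}_{\mathbf{A}},\mathbf{Q}\rangle_\mu^2+\eta_A^2\|\mathbf{h}_{\mathbf{A}}\|_\mu^2,$$ $$\|\boldsymbol\Delta_{\mathbf{V},\tau+1}\|_\mu^2=c_V^2\|\boldsymbol\Delta_{\mathbf{V}}\|_\mu^2-2\eta_Vc_V\langle\boldsymbol\Delta_{\mathbf{V}},\mathbf{h}_{\mathbf{V}}\rangle_\mu-\frac{\eta_V^2}{K_P}\langle\mathbf{P},\mathbf{h}_{\mathbf{V}}\rangle_\mu^2+\eta_V^2\|\mathbf{h}_{\mathbf{V}}\|_\mu^2.$$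
   Context: $\boldsymbol\mu\in\mathbb{R}^N$ is a probability vector with positive entries; $\mathbf{P}\in\mathbb{R}^{N\times N}$ has nonnegative entries, columns summing to $1$, $\mathbf{P}\boldsymbol\mu=\boldsymbol\mu$; $\mathbf{Q}=(\mathbf{q}^{(1)},\dots,\mathbf{q}^{(N)})\in\mathbb{R}^{T\times N}$ has probability-vector columns. Data: $x_1,\dots,x_{T+1}$ i.i.d. with law $\boldsymbol\mu$, $x_o$ with $\Pr(x_o=n\mid x_{T+1}=k,x_1,\dots,x_T)=\sum_tq^{(k)}_tP_{n,x_t}$; $\mathbf{X}=(\mathbf{e}_{x_1},\dots,\mathbf{e}_{x_T})$; loss $l=\frac12\|\mathbf{e}_{x_o}-\mathbf{V}\mathbf{X}\mathbf{A}\mathbf{e}_{x_{T+1}}\|^2$. Preconditioned gradients: $\hat\nabla_{\mathbf{V}}l=(\mathbf{I}_N-\mathbf{1}\mathbf{1}^\top/N)(\nabla_{\mathbf{V}}l)\operatorname{diag}(1/\boldsymbol\mu)(\mathbf{I}_N-\boldsymbol\mu\boldsymbol\mu^\top/\|\boldsymbol\mu\|^2)$; $\hat\nabla_{\mathbf{A}}l$ has columns $\frac1{\mu_k}(\mathbf{I}_T-\mathbf{1}\mathbf{1}^\top/T)\nabla_{\mathbf{a}^{(k)}}l$. The iterate $(\mathbf{V}_\tau,\mathbf{A}_\tau)$ satisfies $\mathbf{1}^\top\mathbf{V}_\tau=\mathbf{1}^\top$, $\mathbf{1}^\top\mathbf{A}_\tau=\mathbf{1}^\top$, $\mathbf{V}_\tau\boldsymbol\mu=\boldsymbol\mu$,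 and $\mathbf{V}_{\tau+1}=\mathbf{V}_\tau-\eta_V(\mathbb{E}\hat\nabla_{\mathbf{V}}l+\mathbf{h}_{\mathbf{V},\tau})$, $\mathbf{A}_{\tau+1}=\mathbf{A}_\tau-\eta_A(\mathbb{E}\hat\nabla_{\mathbf{A}}l+\mathbf{h}_{\mathbf{A},\tau})$, where expectations are over the data at parameters $(\mathbf{V}_\tau,\mathbf{A}_\tau)$, and $\mathbf{h}_{\mathbf{V},\tau}=\hat\nabla^{(B)}_{\mathbf{V}}l-\mathbb{E}\hat\nabla_{\mathbf{V}}l$, $\mathbf{h}_{\mathbf{A},\tau}=\hat\nabla^{(B)}_{\mathbf{A}}l-\mathbb{E}\hat\nabla_{\mathbf{A}}l$ with $\hat\nabla^{(B)}$ the average of preconditioned per-sample gradients over $B$ fresh samples. $\langle\mathbf{M},\mathbf{M}'\rangle_\mu=\operatorname{Tr}(\mathbf{M}\operatorname{diag}(\boldsymbol\mu)\mathbf{M}'^\top)$, $\|\mathbf{M}\|_\mu^2=\langle\mathbf{M},\mathbf{M}\rangle_\mu$. $K_P=\|\mathbf{P}\|_\mu^2-\|\boldsymbol\mu\|^2>0$, $K_Q=\|\mathbf{Q}\|_\mu^2-1/T>0$; for any iterate, $\alpha_V=(\langle\mathbf{V},\mathbf{P}\rangle_\mu-\|\boldsymbol\mu\|^2)/K_P$, $\alpha_A=(\langle\mathbf{A},\mathbf{Q}\rangle_\mu-1/T)/K_Q$, $\boldsymbol\Delta_{\mathbf{V}}=\mathbf{V}-\alpha_V\mathbf{P}-(1-\alpha_V)\boldsymbol\mu\mathbf{1}^\top$,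 $\boldsymbol\Delta_{\mathbf{A}}=\mathbf{A}-\alpha_A\mathbf{Q}-(1-\alpha_A)\mathbf{1}\mathbf{1}^\top/T$; the subscript $\tau+1$ denotes these quantities at $(\mathbf{V}_{\tau+1},\mathbf{A}_{\tau+1})$. *)

From HB Require Import structures.
From mathcomp Require Import all_boot all_order all_algebra.
From mathcomp Require Import all_classical all_reals all_analysis.
Set Implicit Arguments. Unset Strict Implicit. Unset Printing Implicit Defensive.
Import Order.TTheory GRing.Theory Num.Theory.
Local Open Scope ring_scope.

Definition onesr (R : realType) (n : nat) : 'rV[R]_n := const_mx 1.
Definition ecol (R : realType) (n : nat) (k : 'I_n) : 'cV[R]_n :=
  \col_i (i == k)%:R.
Definition sqnorm (R : realType) (n : nat) (v : 'cV[R]_n) : R :=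
  \sum_i v i 0 ^+ 2.
Definition ip_mu (R : realType) (m n : nat) (mu : 'cV[R]_n)
  (M M' : 'M[R]_(m, n)) : R := \tr (M *m diag_mx mu^T *m M'^T).
Definition nrm_mu (R : realType) (m n : nat) (mu : 'cV[R]_n)
  (M : 'M[R]_(m, n)) : R := ip_mu mu M M.

(* a data sample: ((x_1,...,x_T), x_{T+1}, x_o) *)
Definition sample (N T : nat) := ({ffun 'I_T -> 'I_N} * 'I_N * 'I_N)%type.

Definition Xmat (R : realType) (N T : nat) (xs : {ffun 'I_T -> 'I_N})
  : 'M[R]_(N, T) := \matrix_(i, t) (i == xs t)%:R.

(* probability of a sample: x_1..x_{T+1} iid mu, and
   Pr(x_o = n | x_{T+1} = k, x_1..x_T) = sum_t q^(k)_t P_{n, x_t} *)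
Definition prob (R : realType) (N T : nat) (mu : 'cV[R]_N)
  (P : 'M[R]_N) (Q : 'M[R]_(T, N)) (s : sample N T) : R :=
  let: (xs, xq, xo) := s in
  (\prod_t mu (xs t) 0) * mu xq 0 * \sum_t Q t xq * P xo (xs t).

Definition loss (R : realType) (N T : nat) (V : 'M[R]_N) (A : 'M[R]_(T, N))
  (s : sample N T) : R :=
  let: (xs, xq, xo) := s in
  2^-1 * sqnorm (ecol R xo - V *m Xmat R xs *m A *m ecol R xq).

Definition gradV (R : realType) (N T : nat) (V : 'M[R]_N) (A : 'M[R]_(T, N))
  (s : sample N T) : 'M[R]_N :=
  \matrix_(i, j) derive1 (fun r : R => loss (V + r *: delta_mx i j) A s) 0.
Definition gradA (R : realType) (N T : nat) (V : 'M[R]_N) (A : 'M[R]_(T, N))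
  (s : sample N T) : 'M[R]_(T, N) :=
  \matrix_(t, k) derive1 (fun r : R => loss V (A + r *: delta_mx t k) s) 0.

Definition pgradV (R : realType) (N T : nat) (mu : 'cV[R]_N) (V : 'M[R]_N)
  (A : 'M[R]_(T, N)) (s : sample N T) : 'M[R]_N :=
  (1%:M - const_mx (N%:R^-1)) *m gradV V A s
    *m diag_mx (\row_i (mu i 0)^-1)
    *m (1%:M - (sqnorm mu)^-1 *: (mu *m mu^T)).
Definition pgradA (R : realType) (N T : nat) (mu : 'cV[R]_N) (V : 'M[R]_N)
  (A : 'M[R]_(T, N)) (s : sample N T) : 'M[R]_(T, N) :=
  \matrix_(t, k) ((mu k 0)^-1 *:
     ((1%:M - const_mx (T%:R^-1)) *m col k (gradA V A s))) t 0.

Definition Edata (R : realType) (N T m n : nat) (mu : 'cV[R]_N)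
  (P : 'M[R]_N) (Q : 'M[R]_(T, N)) (f : sample N T -> 'M[R]_(m, n))
  : 'M[R]_(m, n) := \sum_(s : sample N T) prob mu P Q s *: f s.

Definition batch_avg (R : realType) (N T m n B : nat) (S : 'I_B -> sample N T)
  (f : sample N T -> 'M[R]_(m, n)) : 'M[R]_(m, n) :=
  B%:R^-1 *: \sum_(b < B) f (S b).

Definition K_P (R : realType) (N : nat) (mu : 'cV[R]_N) (P : 'M[R]_N) : R :=
  nrm_mu mu P - sqnorm mu.
Definition K_Q (R : realType) (N T : nat) (mu : 'cV[R]_N) (Q : 'M[R]_(T, N)) : R :=
  nrm_mu mu Q - T%:R^-1.

Definition alphaV (R : realType) (N : nat) (mu : 'cV[R]_N) (P V : 'M[R]_N) : R :=
  (ip_mu mu V P - sqnorm mu) / K_P mu P.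
Definition alphaA (R : realType) (N T : nat) (mu : 'cV[R]_N)
  (Q A : 'M[R]_(T, N)) : R :=
  (ip_mu mu A Q - T%:R^-1) / K_Q mu Q.
Definition DeltaV (R : realType) (N : nat) (mu : 'cV[R]_N) (P V : 'M[R]_N)
  : 'M[R]_N :=
  V - alphaV mu P V *: P - (1 - alphaV mu P V) *: (mu *m onesr R N).
Definition DeltaA (R : realType) (N T : nat) (mu : 'cV[R]_N)
  (Q A : 'M[R]_(T, N)) : 'M[R]_(T, N) :=
  A - alphaA mu Q A *: Q - (1 - alphaA mu Q A) *: const_mx (T%:R^-1).

(* Because x_1, ..., x_T are i.i.d. with law mu, only the joint law of pairs
   (x_s, x_t) enters the expected gradients, and they come out in closed form:
   with J = 1 1^T / T and M = mu 1^T,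
     E[grad_A] = (||V||^2 - ||mu||^2) (A - J) - (<V, P> - ||mu||^2) (Q - J),
     E[grad_V] = ||A||^2 (V - M) - <A, Q> (P - M).
   So each step moves X (= A or V) towards the affine line through Z (= J or M)
   and the target B (= Q or P) with rate kappa, plus the noise h.  All of X, B
   and Z have the same inner product z with Z, and h is orthogonal to Z (its
   columns sum to 0, resp. h mu = 0), so the residual
   Delta = X - alpha B - (1 - alpha) Z obeys an exact quadratic recursion with
   contraction factor 1 - eta kappa; the Pythagorean identity
   ||X||^2 = K alpha^2 + z + ||Delta||^2 turns that factor into c_A, resp. c_V. *)

From HB Require Import structures.
From mathcomp Require Import all_boot all_order all_algebra.
From mathcomp Require Import all_classical all_reals all_analysis.
From mathcomp Require Import ring.
Import Order.TTheory GRing.Theory Num.Theory.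
Local Open Scope ring_scope.

Set Implicit Arguments. Unset Strict Implicit. Unset Printing Implicit Defensive.

Section MuInnerProduct.
Variables (R : realType) (m n : nat) (mu : 'cV[R]_n).
Implicit Types (M X h : 'M[R]_(m, n)) (c : R).

Lemma ip_muE M M' : ip_mu mu M M' = \sum_i \sum_k M i k * mu k 0 * M' i k.
Proof.
rewrite /ip_mu /mxtrace; apply: eq_bigr => i _.
by rewrite mxE; apply: eq_bigr => k _; rewrite mul_mx_diag !mxE.
Qed.

Lemma ip_muC M M' : ip_mu mu M M' = ip_mu mu M' M.
Proof. by rewrite !ip_muE; apply: eq_bigr => i _; apply: eq_bigr => k _; ring. Qed.

Lemma ip_muDl M1 M2 M' : ip_mu mu (M1 + M2) M' = ip_mu mu M1 M' + ip_mu mu M2 M'.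
Proof.
rewrite !ip_muE -big_split; apply: eq_bigr => i _.
by rewrite -big_split; apply: eq_bigr => k _; rewrite !mxE /=; ring.
Qed.

Lemma ip_muZl c M M' : ip_mu mu (c *: M) M' = c * ip_mu mu M M'.
Proof.
rewrite !ip_muE mulr_sumr; apply: eq_bigr => i _.
by rewrite mulr_sumr; apply: eq_bigr => k _; rewrite !mxE; ring.
Qed.

Lemma ip_muNl M M' : ip_mu mu (- M) M' = - ip_mu mu M M'.
Proof. by rewrite -scaleN1r ip_muZl mulN1r. Qed.

Lemma ip_muDr M1 M2 M' : ip_mu mu M' (M1 + M2) = ip_mu mu M' M1 + ip_mu mu M' M2.
Proof. by rewrite ip_muC ip_muDl !(ip_muC M'). Qed.

Lemma ip_muZr c M M' : ip_mu mu M' (c *: M) = c * ip_mu mu M' M.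
Proof. by rewrite ip_muC ip_muZl ip_muC. Qed.

Lemma ip_muNr M M' : ip_mu mu M' (- M) = - ip_mu mu M' M.
Proof. by rewrite ip_muC ip_muNl ip_muC. Qed.

Lemma ip_mu_const M c : ip_mu mu M (const_mx c) = c * \sum_k mu k 0 * \sum_t M t k.
Proof.
rewrite ip_muE exchange_big /= mulr_sumr; apply: eq_bigr => k _.
by rewrite !mulr_sumr; apply: eq_bigr => t _; rewrite mxE; ring.
Qed.

Lemma ip_mu_mul_ones M (nu : 'cV[R]_m) :
  ip_mu mu M (nu *m onesr R n) = \sum_i nu i 0 * (M *m mu) i 0.
Proof.
rewrite ip_muE; apply: eq_bigr => i _; rewrite mxE mulr_sumr.
by apply: eq_bigr => k _; rewrite mxE big_ord1 mxE; ring.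
Qed.

Definition affine_resid (B Z : 'M[R]_(m, n)) (z : R) (Y : 'M[R]_(m, n)) :=
  Y - ((ip_mu mu Y B - z) / (nrm_mu mu B - z)) *: B
    - (1 - (ip_mu mu Y B - z) / (nrm_mu mu B - z)) *: Z.

Variables (B Z : 'M[R]_(m, n)) (z : R).
Hypotheses (BZ_z : ip_mu mu B Z = z) (ZZ_z : ip_mu mu Z Z = z)
  (KB_neq0 : nrm_mu mu B - z != 0).

Lemma nrm_mu_affine_resid X : ip_mu mu X Z = z ->
  nrm_mu mu X = (nrm_mu mu B - z) * ((ip_mu mu X B - z) / (nrm_mu mu B - z)) ^+ 2
                + z + nrm_mu mu (affine_resid B Z z X).
Proof.
move=> XZ_z; move: KB_neq0; rewrite /affine_resid /nrm_mu.
rewrite !(ip_muDl, ip_muDr, ip_muNl, ip_muNr, ip_muZl, ip_muZr).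
rewrite !(ip_muC Z) XZ_z BZ_z ZZ_z !(ip_muC B X).
by move=> ?; field.
Qed.

(* The drift coefficient of [B - Z] is irrelevant: that direction is absorbed by
   the residual projection. *)
Lemma nrm_mu_affine_resid_step X h (eta kap c : R) :
  ip_mu mu X Z = z -> ip_mu mu h Z = 0 ->
  nrm_mu mu (affine_resid B Z z (X - eta *: (kap *: (X - Z) - c *: (B - Z) + h))) =
  (1 - eta * kap) ^+ 2 * nrm_mu mu (affine_resid B Z z X)
  - 2 * eta * (1 - eta * kap) * ip_mu mu (affine_resid B Z z X) h
  - eta ^+ 2 / (nrm_mu mu B - z) * (ip_mu mu h B) ^+ 2 + eta ^+ 2 * nrm_mu mu h.
Proof.
move=> XZ_z hZ0; move: KB_neq0; rewrite /affine_resid /nrm_mu.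
rewrite !(ip_muDl, ip_muDr, ip_muNl, ip_muNr, ip_muZl, ip_muZr).
rewrite !(ip_muC Z) XZ_z BZ_z ZZ_z hZ0 !(ip_muC B X) !(ip_muC h X) !(ip_muC h B).
by move=> ?; field.
Qed.

End MuInnerProduct.

Lemma derive1_quadratic0 (R : realType) (a b c : R) :
  derive1 (fun r : R => a + r * b + r * r * c) 0 = b.
Proof.
have -> : (fun r : R => a + r * b + r * r * c) = horner (a%:P + b *: 'X + c *: 'X^2).
  by apply/funext => r; rewrite !hornerE /=; ring.
rewrite derive1E (@derive_val _ _ _ _ _ _ _ (is_derive_poly _ _)).
by rewrite !derivD derivC !derivZ derivX derivXn !hornerE /=; ring.
Qed.

Lemma derive1_half_sqnorm0 (R : realType) n (u w : 'cV[R]_n) :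
  derive1 (fun r : R => 2^-1 * sqnorm (u - r *: w)) 0 = - \sum_i u i 0 * w i 0.
Proof.
rewrite -[RHS](derive1_quadratic0 (2^-1 * \sum_i u i 0 ^+ 2) _ (2^-1 * \sum_i w i 0 ^+ 2)).
congr derive1; apply/funext => r; rewrite /sqnorm -sumrN !mulr_sumr -!big_split /=.
by apply: eq_bigr => i _; rewrite !mxE; field.
Qed.

Lemma sumr_indicator (R : pzSemiRingType) n (x : 'I_n) (G : 'I_n -> R) :
  \sum_a (x == a)%:R * G a = G x.
Proof.
rewrite (bigD1 x) //= eqxx mul1r big1 ?addr0 // => a /negbTE.
by rewrite eq_sym => ->; rewrite mul0r.
Qed.

Lemma ecolE (R : realType) n (k : 'I_n) : ecol R k = delta_mx k 0.
Proof. by apply/matrixP => i j; rewrite !mxE (ord1 j) eqxx andbT. Qed.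

Section Gradients.
Variables (R : realType) (N T : nat) (V : 'M[R]_N) (A : 'M[R]_(T, N)).
Variables (xs : {ffun 'I_T -> 'I_N}) (xq xo : 'I_N).

Definition attn := Xmat R xs *m A *m ecol R xq.

Lemma attnE j : attn j 0 = \sum_t (j == xs t)%:R * A t xq.
Proof. by rewrite /attn ecolE -mulmxA -colE mxE; apply: eq_bigr => t _; rewrite !mxE. Qed.

Lemma mul_attnE l : (V *m attn) l 0 = \sum_s V l (xs s) * A s xq.
Proof.
rewrite mxE; under eq_bigr do rewrite attnE mulr_sumr.
rewrite exchange_big /=; apply: eq_bigr => s _.
rewrite -[RHS](sumr_indicator (xs s) (fun j => V l j * A s xq)).
by apply: eq_bigr => j _; rewrite eq_sym; ring.
Qed.

Let resid_entry l : (ecol R xo - V *m attn) l 0 = (l == xo)%:R - (V *m attn) l 0.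
Proof. by rewrite !mxE. Qed.

Lemma gradV_sampleE i j :
  gradV V A (xs, xq, xo) i j = ((V *m attn) i 0 - (i == xo)%:R) * attn j 0.
Proof.
rewrite /gradV mxE.
have -> : (fun r : R => loss (V + r *: delta_mx i j) A (xs, xq, xo)) =
    (fun r => 2^-1 * sqnorm ((ecol R xo - V *m attn) - r *: (delta_mx i j *m attn))).
  apply/funext => r; rewrite /loss /attn -!mulmxA mulmxDl -scalemxAl.
  by rewrite opprD addrA.
rewrite derive1_half_sqnorm0 -sumrN.
rewrite -[RHS](sumr_indicator i (fun=> ((V *m attn) i 0 - (i == xo)%:R) * attn j 0)).
apply: eq_bigr => l _.
have -> : (delta_mx i j *m attn) l 0 = (l == i)%:R * attn j 0.
  rewrite mxE (bigD1 j) //= big1 ?addr0; first by rewrite mxE eqxx andbT.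
  by move=> a /negbTE ha; rewrite mxE ha andbF mul0r.
rewrite resid_entry; have [->|_] := eqVneq i l; last by rewrite !mul0r mulr0 oppr0.
by rewrite /=; ring.
Qed.

Lemma gradA_sampleE t k :
  gradA V A (xs, xq, xo) t k =
  (xq == k)%:R * \sum_l ((V *m attn) l 0 - (l == xo)%:R) * V l (xs t).
Proof.
rewrite /gradA mxE.
have -> : (fun r : R => loss V (A + r *: delta_mx t k) (xs, xq, xo)) =
    (fun r => 2^-1 * sqnorm ((ecol R xo - V *m attn) -
       r *: (V *m (Xmat R xs *m (delta_mx t k *m ecol R xq))))).
  apply/funext => r; rewrite /loss /attn !mulmxDr !mulmxDl -!scalemxAr -!scalemxAl !mulmxA.
  by rewrite opprD addrA.
rewrite derive1_half_sqnorm0 -sumrN mulr_sumr; apply: eq_bigr => l _.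
have -> : (V *m (Xmat R xs *m (delta_mx t k *m ecol R xq))) l 0 = (xq == k)%:R * V l (xs t).
  rewrite ecolE mul_delta_mx_cond [k == xq]eq_sym; case: eqP => _ /=; last first.
    by rewrite mulr0n !mulmx0 mxE mul0r.
  rewrite mulr1n -colE mul1r mxE (bigD1 (xs t)) //= big1 ?addr0; first by rewrite !mxE eqxx mulr1.
  by move=> a /negbTE ha; rewrite !mxE ha mulr0.
by rewrite resid_entry; ring.
Qed.

End Gradients.

Lemma sumr_mul_ifeq (R : comPzRingType) n (c : 'I_n -> R) (t : 'I_n) (d e : R) :
  \sum_s c s * (if s == t then d else e) = e * \sum_s c s + c t * (d - e).
Proof.
rewrite mulr_sumr -[c t * _](sumr_indicator t (fun s => c s * (d - e))) -big_split /=.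
by apply: eq_bigr => s _; rewrite eq_sym; case: eqP => _ /=; ring.
Qed.

Section IidInputs.
Variables (R : realType) (N T : nat) (mu : 'cV[R]_N).
Hypothesis mu_sum1 : \sum_i mu i 0 = 1.

Let sum_mu_indicator a : \sum_j mu j 0 * (j == a)%:R = mu a 0.
Proof.
rewrite -[RHS](sumr_indicator a (fun j => mu j 0)).
by apply: eq_bigr => j _; rewrite eq_sym mulrC.
Qed.

Lemma iid_indicator_mean (s t : 'I_T) (a b : 'I_N) :
  \sum_(xs : {ffun 'I_T -> 'I_N}) (\prod_i mu (xs i) 0) * (xs s == a)%:R * (xs t == b)%:R
  = if s == t then (a == b)%:R * mu a 0 else mu a 0 * mu b 0.
Proof.
pose w i j := mu j 0 * (if i == s then (j == a)%:R else 1)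
                     * (if i == t then (j == b)%:R else 1).
transitivity (\prod_i \sum_j w i j).
  rewrite bigA_distr_bigA; apply: eq_bigr => xs _.
  by rewrite /w !big_split /= -!big_mkcond !big_pred1_eq.
have w_other i : i != s -> i != t -> \sum_j w i j = 1.
  move=> /negbTE ns /negbTE nt; rewrite /w ns nt -[RHS]mu_sum1.
  by apply: eq_bigr => j _; rewrite !mulr1.
rewrite (bigD1 s) //; have [st | st] := eqVneq s t.
  rewrite [\prod_(i | _) _]big1 => [|i ns]; last by apply: w_other; rewrite -?st.
  rewrite Monoid.mulm1 /w -st eqxx -[RHS](sumr_indicator a (fun j => (j == b)%:R * mu j 0)).
  by apply: eq_bigr => j _; rewrite eq_sym; ring.
rewrite (bigD1 t); last by rewrite eq_sym.
rewrite [\prod_(i | _) _]big1 => [|i /andP[? ?]]; last exact: w_other.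
rewrite Monoid.mulm1 /w eqxx (negbTE st) eq_sym (negbTE st) eqxx.
rewrite -(sum_mu_indicator a) -(sum_mu_indicator b).
by congr (_ * _); apply: eq_bigr => j _; ring.
Qed.

Lemma iid_pair_mean (F : 'I_N -> 'I_N -> R) (s t : 'I_T) :
  \sum_(xs : {ffun 'I_T -> 'I_N}) (\prod_i mu (xs i) 0) * F (xs s) (xs t) =
  if s == t then \sum_a mu a 0 * F a a
  else \sum_a \sum_b mu a 0 * mu b 0 * F a b.
Proof.
transitivity (\sum_a \sum_b F a b * \sum_(xs : {ffun 'I_T -> 'I_N})
                (\prod_i mu (xs i) 0) * (xs s == a)%:R * (xs t == b)%:R).
  transitivity (\sum_(xs : {ffun 'I_T -> 'I_N}) \sum_a \sum_b
                  F a b * ((\prod_i mu (xs i) 0) * (xs s == a)%:R * (xs t == b)%:R)).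
    apply: eq_bigr => xs _; set W := \prod_i _.
    rewrite (eq_bigr (fun a => (xs s == a)%:R * \sum_b (xs t == b)%:R * (W * F a b))).
      by rewrite !sumr_indicator.
    by move=> a _; rewrite mulr_sumr; apply: eq_bigr => b _; ring.
  rewrite exchange_big; apply: eq_bigr => a _ /=.
  rewrite exchange_big; apply: eq_bigr => b _ /=.
  by rewrite mulr_sumr.
under eq_bigr do under eq_bigr do rewrite iid_indicator_mean.
have [_ | _] := eqVneq s t; apply: eq_bigr => a _.
  rewrite -[RHS](sumr_indicator a (fun b => mu a 0 * F a b)).
  by apply: eq_bigr => b _; rewrite eq_sym; ring.
by apply: eq_bigr => b _; ring.
Qed.

Lemma iid_bilinear_mean (G : 'I_N -> 'I_N -> R) (al be : 'I_T -> R) :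
  \sum_(xs : {ffun 'I_T -> 'I_N}) (\prod_i mu (xs i) 0) *
     (\sum_s \sum_s' al s * be s' * G (xs s) (xs s')) =
  (\sum_s al s) * (\sum_s be s) * (\sum_a \sum_b mu a 0 * mu b 0 * G a b)
  + (\sum_s al s * be s) * (\sum_a mu a 0 * G a a - \sum_a \sum_b mu a 0 * mu b 0 * G a b).
Proof.
transitivity (\sum_s \sum_s' al s * be s' *
   \sum_(xs : {ffun 'I_T -> 'I_N}) (\prod_i mu (xs i) 0) * G (xs s) (xs s')).
  under eq_bigr do rewrite mulr_sumr.
  rewrite exchange_big /=; apply: eq_bigr => s _.
  under eq_bigr do rewrite mulr_sumr.
  rewrite exchange_big /=; apply: eq_bigr => s' _.
  by rewrite mulr_sumr; apply: eq_bigr => xs _; ring.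
under eq_bigr => s _ do under eq_bigr => s' _ do rewrite iid_pair_mean // [s == s']eq_sym.
set d := \sum_a mu a 0 * G a a; set m := \sum_a \sum_b mu a 0 * mu b 0 * G a b.
under eq_bigr => s _ do rewrite (sumr_mul_ifeq (fun s' => al s * be s') s d m).
by rewrite big_split /= -mulr_sumr -mulr_suml [(\sum_s al s) * _]big_distrlr /=; ring.
Qed.

End IidInputs.

Lemma sum_sampleE (R : realType) N T (F : sample N T -> R) :
  \sum_s F s = \sum_xs \sum_xq \sum_xo F (xs, xq, xo).
Proof.
rewrite pair_bigA /= (pair_bigA _ (fun p xo => F (p.1, p.2, xo))) /=.
by apply: eq_bigr => [[[xs xq] xo]] _.
Qed.

Lemma Edata_entry (R : realType) N T m n (mu : 'cV[R]_N) (P : 'M[R]_N)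
    (Q : 'M[R]_(T, N)) (f : sample N T -> 'M[R]_(m, n)) i j :
  Edata mu P Q f i j = \sum_s prob mu P Q s * f s i j.
Proof. by rewrite /Edata summxE; apply: eq_bigr => s _; rewrite mxE. Qed.

Lemma Edata_mulmx (R : realType) N T m n p q (mu : 'cV[R]_N) (P : 'M[R]_N)
    (Q : 'M[R]_(T, N)) (L : 'M[R]_(m, n)) (f : sample N T -> 'M[R]_(n, p))
    (M : 'M[R]_(p, q)) :
  Edata mu P Q (fun s => L *m f s *m M) = L *m Edata mu P Q f *m M.
Proof.
rewrite /Edata mulmx_sumr mulmx_suml; apply: eq_bigr => s _.
by rewrite -scalemxAr -scalemxAl.
Qed.

Lemma ones_mulmxE (R : realType) m n (M : 'M[R]_(m, n)) k :
  (onesr R m *m M) 0 k = \sum_t M t k.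
Proof. by rewrite mxE; apply: eq_bigr => t _; rewrite mxE mul1r. Qed.

Lemma mulmx_fixed_entry (R : realType) n (M : 'M[R]_n) (mu : 'cV[R]_n) o :
  M *m mu = mu -> \sum_a M o a * mu a 0 = mu o 0.
Proof. by move/(congr1 (fun X : 'cV[R]_n => X o 0)); rewrite mxE. Qed.

Definition gram (R : realType) m n (M1 M2 : 'M[R]_(m, n)) (a b : 'I_n) : R :=
  \sum_o M1 o a * M2 o b.

Lemma gram_diag_mean (R : realType) m n (mu : 'cV[R]_n) (M1 M2 : 'M[R]_(m, n)) :
  \sum_a mu a 0 * gram M1 M2 a a = ip_mu mu M1 M2.
Proof.
rewrite ip_muE exchange_big /=; apply: eq_bigr => a _.
by rewrite mulr_sumr; apply: eq_bigr => o _; ring.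
Qed.

Lemma gram_mean (R : realType) n (mu : 'cV[R]_n) (M1 M2 : 'M[R]_n) :
  M1 *m mu = mu -> M2 *m mu = mu ->
  \sum_a \sum_b mu a 0 * mu b 0 * gram M1 M2 a b = sqnorm mu.
Proof.
move=> M1mu M2mu; rewrite /sqnorm.
transitivity (\sum_o (\sum_a M1 o a * mu a 0) * (\sum_b M2 o b * mu b 0)); last first.
  by apply: eq_bigr => o _; rewrite !mulmx_fixed_entry // expr2.
under eq_bigr => a _ do under eq_bigr => b _ do rewrite mulr_sumr.
under eq_bigr => a _ do rewrite exchange_big /=.
rewrite exchange_big /=; apply: eq_bigr => o _.
rewrite mulr_suml; apply: eq_bigr => a _.
by rewrite mulr_sumr; apply: eq_bigr => b _; ring.
Qed.

Definition outer_entry (R : realType) n (M : 'M[R]_n) (i j a b : 'I_n) : R :=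
  M i a * (j == b)%:R.

Lemma outer_entry_diag_mean (R : realType) n (M : 'M[R]_n) (mu : 'cV[R]_n) i j :
  \sum_a mu a 0 * outer_entry M i j a a = mu j 0 * M i j.
Proof.
rewrite -[RHS](sumr_indicator j (fun a => mu a 0 * M i a)).
by apply: eq_bigr => a _; rewrite /outer_entry eq_sym; ring.
Qed.

Lemma outer_entry_mean (R : realType) n (M : 'M[R]_n) (mu : 'cV[R]_n) i j :
  M *m mu = mu -> \sum_a \sum_b mu a 0 * mu b 0 * outer_entry M i j a b = mu i 0 * mu j 0.
Proof.
move=> Mmu; rewrite -(mulmx_fixed_entry i Mmu) mulr_suml; apply: eq_bigr => a _.
rewrite -[RHS](sumr_indicator j (fun b => M i a * mu a 0 * mu b 0)).
by apply: eq_bigr => b _; rewrite /outer_entry eq_sym; ring.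
Qed.

Lemma sumr_mulrBr (R : pzRingType) (I : finType) (f g h : I -> R) :
  \sum_x f x * (g x - h x) = \sum_x f x * g x - \sum_x f x * h x.
Proof. by rewrite -sumrB; apply: eq_bigr => x _; rewrite mulrBr. Qed.

Section ExpectedGradients.
Variables (R : realType) (N T : nat) (mu : 'cV[R]_N) (P V : 'M[R]_N) (Q A : 'M[R]_(T, N)).
Hypotheses (mu_gt0 : forall i, 0 < mu i 0) (mu_sum1 : \sum_i mu i 0 = 1)
  (P_colsum1 : onesr R N *m P = onesr R N) (Q_colsum1 : onesr R T *m Q = onesr R N)
  (V_colsum1 : onesr R N *m V = onesr R N) (A_colsum1 : onesr R T *m A = onesr R N)
  (P_mu : P *m mu = mu) (V_mu : V *m mu = mu).

Let P_col a : \sum_o P o a = 1.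
Proof. by rewrite -ones_mulmxE P_colsum1 mxE. Qed.

Let Q_col k : \sum_t Q t k = 1.
Proof. by rewrite -ones_mulmxE Q_colsum1 mxE. Qed.

Let A_col k : \sum_t A t k = 1.
Proof. by rewrite -ones_mulmxE A_colsum1 mxE. Qed.

Lemma output_mass1 (xs : {ffun 'I_T -> 'I_N}) k :
  \sum_xo \sum_t Q t k * P xo (xs t) = 1.
Proof.
rewrite exchange_big /= -[RHS](Q_col k); apply: eq_bigr => t _.
by rewrite -mulr_sumr P_col mulr1.
Qed.

Lemma output_mean (xs : {ffun 'I_T -> 'I_N}) k (C : R) b :
  \sum_xo (\sum_t Q t k * P xo (xs t)) * (C - V xo b) =
  C - \sum_t Q t k * gram P V (xs t) b.
Proof.
rewrite (eq_bigr (fun xo => C * \sum_t Q t k * P xo (xs t)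
                          - \sum_t Q t k * (P xo (xs t) * V xo b))); last first.
  move=> xo _; rewrite mulrBr [X in _ - X]mulr_suml mulrC; congr (_ - _).
  by apply: eq_bigr => t _; ring.
rewrite sumrB -mulr_sumr output_mass1 mulr1 exchange_big /=; congr (_ - _).
by apply: eq_bigr => t _; rewrite /gram mulr_sumr.
Qed.

Lemma gradA_mean_given_inputs (xs : {ffun 'I_T -> 'I_N}) t' k :
  \sum_xq \sum_xo prob mu P Q (xs, xq, xo) * gradA V A (xs, xq, xo) t' k =
  mu k 0 * ((\prod_i mu (xs i) 0) *
     (\sum_s A s k * gram V V (xs s) (xs t') - \sum_s Q s k * gram P V (xs s) (xs t'))).
Proof.
rewrite (bigD1 k) //= [\sum_(xq | xq != k) _]big1 ?addr0; last first.
  by move=> xq /negbTE nk; apply: big1 => xo _; rewrite gradA_sampleE nk mul0r mulr0.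
under eq_bigr => xo _ do rewrite gradA_sampleE eqxx mul1r.
have gradA_xo xo : \sum_l ((V *m attn A xs k) l 0 - (l == xo)%:R) * V l (xs t') =
    \sum_s A s k * gram V V (xs s) (xs t') - V xo (xs t').
  rewrite (eq_bigr (fun l => (V *m attn A xs k) l 0 * V l (xs t')
                            - (xo == l)%:R * V l (xs t'))); last first.
    by move=> l _; rewrite eq_sym; ring.
  rewrite sumrB sumr_indicator; congr (_ - _).
  under eq_bigr do rewrite mul_attnE mulr_suml.
  rewrite exchange_big /=; apply: eq_bigr => s _.
  by rewrite /gram mulr_sumr; apply: eq_bigr => l _; ring.
under eq_bigr => xo _ do rewrite gradA_xo.
rewrite /prob (eq_bigr (fun xo => ((\prod_t mu (xs t) 0) * mu k 0) *
    ((\sum_t Q t k * P xo (xs t)) *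
     (\sum_s A s k * gram V V (xs s) (xs t') - V xo (xs t'))))); last by move=> xo _; ring.
by rewrite -mulr_sumr output_mean; ring.
Qed.

Lemma mean_gradA_entry t' k :
  \sum_s prob mu P Q s * gradA V A s t' k =
  mu k 0 * ((nrm_mu mu V - sqnorm mu) * A t' k - (ip_mu mu V P - sqnorm mu) * Q t' k).
Proof.
rewrite sum_sampleE; under eq_bigr do rewrite gradA_mean_given_inputs.
rewrite -mulr_sumr; congr (_ * _).
under eq_bigr do rewrite mulrBr !mulr_sumr.
transitivity (\sum_s A s k * (\sum_(xs : {ffun 'I_T -> 'I_N})
                 (\prod_i mu (xs i) 0) * gram V V (xs s) (xs t'))
  - \sum_s Q s k * (\sum_(xs : {ffun 'I_T -> 'I_N})
                 (\prod_i mu (xs i) 0) * gram P V (xs s) (xs t'))).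
  rewrite sumrB; congr (_ - _); rewrite exchange_big /=; apply: eq_bigr => s _;
  by rewrite mulr_sumr; apply: eq_bigr => xs _; ring.
under eq_bigr do rewrite iid_pair_mean //.
under [X in _ - X]eq_bigr do rewrite iid_pair_mean //.
rewrite !sumr_mul_ifeq A_col Q_col !gram_diag_mean !gram_mean // /nrm_mu (ip_muC mu P V).
ring.
Qed.

Lemma gradV_mean_given_inputs (xs : {ffun 'I_T -> 'I_N}) (xq i j : 'I_N) :
  \sum_xo prob mu P Q (xs, xq, xo) * gradV V A (xs, xq, xo) i j =
  mu xq 0 * ((\prod_t mu (xs t) 0) *
    (\sum_s \sum_s' A s xq * A s' xq * outer_entry V i j (xs s) (xs s')
     - \sum_s \sum_s' Q s xq * A s' xq * outer_entry P i j (xs s) (xs s'))).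
Proof.
set y := attn A xs xq j 0; set c := (V *m attn A xs xq) i 0.
rewrite (eq_bigr (fun xo => (mu xq 0 * (\prod_t mu (xs t) 0)) *
    (y * (c * (\sum_t Q t xq * P xo (xs t)) - (i == xo)%:R * (\sum_t Q t xq * P xo (xs t))))));
  last by move=> xo _; rewrite gradV_sampleE /prob -/y -/c; ring.
rewrite -mulr_sumr -mulrA; congr (_ * (_ * _)).
rewrite -mulr_sumr sumrB -mulr_sumr output_mass1 mulr1 sumr_indicator.
rewrite /y /c attnE mul_attnE mulrBr !big_distrlr /=.
by congr (_ - _); rewrite exchange_big /=; apply: eq_bigr => s _;
  apply: eq_bigr => s' _; rewrite /outer_entry; ring.
Qed.

Lemma mean_gradV_entry i j :
  \sum_s prob mu P Q s * gradV V A s i j =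
  nrm_mu mu A * (V i j * mu j 0 - mu i 0 * mu j 0)
  - ip_mu mu A Q * (P i j * mu j 0 - mu i 0 * mu j 0).
Proof.
rewrite sum_sampleE.
under eq_bigr => xs _ do under eq_bigr => xq _ do rewrite gradV_mean_given_inputs.
rewrite exchange_big /=.
under eq_bigr => xq _ do rewrite -mulr_sumr sumr_mulrBr !iid_bilinear_mean //
  !outer_entry_diag_mean !outer_entry_mean // A_col Q_col.
rewrite /nrm_mu (ip_muC mu A Q) -!gram_diag_mean !mulr_suml -sumrB; apply: eq_bigr => q _.
rewrite /gram; ring.
Qed.

Lemma ones_mul_mu : onesr R N *m mu = 1%:M.
Proof.
by apply/matrixP => a b; rewrite (ord1 a) (ord1 b) ones_mulmxE mu_sum1 mxE.
Qed.

Lemma centering_fixes (Y : 'M[R]_N) :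
  onesr R N *m Y = 0 -> Y *m mu = 0 ->
  (1%:M - const_mx (N%:R^-1)) *m Y *m (1%:M - (sqnorm mu)^-1 *: (mu *m mu^T)) = Y.
Proof.
move=> Y_colsum0 Y_mu0.
have JY0 : (const_mx (N%:R^-1) : 'M[R]_N) *m Y = 0.
  apply/matrixP => i j; rewrite !mxE.
  under eq_bigr do rewrite mxE.
  by rewrite -mulr_sumr -ones_mulmxE Y_colsum0 mxE mulr0.
by rewrite mulmxBl mul1mx JY0 subr0 mulmxBr mulmx1 -scalemxAr mulmxA Y_mu0 mul0mx scaler0 subr0.
Qed.

Lemma mean_pgradA :
  Edata mu P Q (pgradA mu V A) =
  (nrm_mu mu V - sqnorm mu) *: (A - const_mx (T%:R^-1))
  - (ip_mu mu V P - sqnorm mu) *: (Q - const_mx (T%:R^-1)).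
Proof.
apply/matrixP => t k; rewrite Edata_entry.
rewrite (eq_bigr (fun s => (mu k 0)^-1 * \sum_t' ((1%:M - const_mx (T%:R^-1) : 'M[R]_T) t t' *
   (prob mu P Q s * gradA V A s t' k)))); last first.
  move=> s _; rewrite /pgradA !mxE mulrCA mulr_sumr; congr (_ * _).
  by apply: eq_bigr => t' _; rewrite !mxE; ring.
rewrite -mulr_sumr exchange_big /=.
under eq_bigr => t' _ do rewrite -mulr_sumr mean_gradA_entry.
set a1 := nrm_mu mu V - sqnorm mu; set a2 := ip_mu mu V P - sqnorm mu.
rewrite (eq_bigr (fun t' => ((t == t')%:R * (a1 * A t' k - a2 * Q t' k)
                     - T%:R^-1 * (a1 * A t' k - a2 * Q t' k)) * mu k 0)); last first.
  by move=> t' _; rewrite !mxE; ring.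
rewrite -mulr_suml mulrCA mulVf ?gt_eqF // mulr1.
by rewrite sumrB sumr_indicator -mulr_sumr sumrB -!mulr_sumr A_col Q_col !mxE; ring.
Qed.

Lemma mean_pgradV :
  Edata mu P Q (pgradV mu V A) =
  nrm_mu mu A *: (V - mu *m onesr R N) - ip_mu mu A Q *: (P - mu *m onesr R N).
Proof.
set Y := nrm_mu mu A *: _ - _.
have EgradV : Edata mu P Q (gradV V A) *m diag_mx (\row_i (mu i 0)^-1) = Y.
  apply/matrixP => i j; rewrite mul_mx_diag !mxE Edata_entry mean_gradV_entry.
  rewrite big_ord1 !mxE mulr1.
  have mu_j_neq0 : mu j 0 != 0 by rewrite gt_eqF.
  by field.
rewrite /pgradV.
rewrite (_ : (fun s => _) = (fun s => (1%:M - const_mx (N%:R^-1)) *m gradV V A s *m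
   (diag_mx (\row_i (mu i 0)^-1) *m (1%:M - (sqnorm mu)^-1 *: (mu *m mu^T))))); last first.
  by apply/funext => s; rewrite !mulmxA.
rewrite Edata_mulmx -mulmxA [X in _ *m X]mulmxA EgradV mulmxA centering_fixes //.
  rewrite /Y mulmxBr -!scalemxAr !mulmxBr !mulmxA ones_mul_mu !mul1mx P_colsum1 V_colsum1.
  by rewrite !subrr !scaler0 subrr.
rewrite /Y mulmxBl -!scalemxAl !mulmxBl -!mulmxA ones_mul_mu !mulmx1 P_mu V_mu.
by rewrite !subrr !scaler0 subrr.
Qed.

End ExpectedGradients.

Lemma sqnorm_gt0 (R : realType) n (mu : 'cV[R]_n) :
  (forall i, 0 < mu i 0) -> \sum_i mu i 0 = 1 -> 0 < sqnorm mu.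
Proof.
case: n mu => [|n] mu mu_gt0; first by rewrite big_ord0 => /eqP; rewrite eq_sym oner_eq0.
move=> _; rewrite /sqnorm (bigD1 ord0) //=; apply: ltr_wpDr; last exact: exprn_gt0.
by apply: sumr_ge0 => i _; exact: sqr_ge0.
Qed.

(* For [T = 0] the constant [1/T] is Rocq's junk value [0^-1 = 0], which forces [K_Q = 0]. *)
Lemma K_Q_gt0_T_neq0 (R : realType) N T (mu : 'cV[R]_N) (Q : 'M[R]_(T, N)) :
  0 < K_Q mu Q -> (T%:R : R) != 0.
Proof.
case: T Q => [|T] Q; last by rewrite pnatr_eq0.
by rewrite /K_Q /nrm_mu ip_muE big_ord0 invr0 subrr ltxx.
Qed.

Lemma ones_mul_pgradA (R : realType) N T (mu : 'cV[R]_N) (V : 'M[R]_N)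
    (A : 'M[R]_(T, N)) s :
  (T%:R : R) != 0 -> onesr R T *m pgradA mu V A s = 0.
Proof.
move=> T_neq0; apply/matrixP => i k; rewrite (ord1 i) ones_mulmxE !mxE.
under eq_bigr do rewrite !mxE mulr_sumr.
rewrite exchange_big big1 // => t' _.
rewrite -mulr_sumr -mulr_suml.
have -> : \sum_t (1%:M - const_mx T%:R^-1 : 'M[R]_T) t t' = 0.
  under eq_bigr do rewrite !mxE.
  rewrite sumrB sumr_const card_ord -[_^-1 *+ T]mulr_natr mulVf // (bigD1 t') //= eqxx.
  by rewrite big1 ?addr0 ?subrr // => t /negbTE ->.
by rewrite mul0r mulr0.
Qed.

Lemma pgradV_mul_mu (R : realType) N T (mu : 'cV[R]_N) (V : 'M[R]_N)
    (A : 'M[R]_(T, N)) s :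
  sqnorm mu != 0 -> pgradV mu V A s *m mu = 0.
Proof.
move=> sq_neq0; have muTmu : mu^T *m mu = (sqnorm mu)%:M.
  apply/matrixP => a b; rewrite (ord1 a) (ord1 b) !mxE /= /sqnorm mulr1n.
  by apply: eq_bigr => i _; rewrite mxE expr2.
have proj_mu0 : (1%:M - (sqnorm mu)^-1 *: (mu *m mu^T)) *m mu = 0.
  by rewrite mulmxBl mul1mx -scalemxAl -mulmxA muTmu mul_mx_scalar scalerA mulVf ?scale1r ?subrr.
by rewrite /pgradV -[LHS]mulmxA proj_mu0 mulmx0.
Qed.

Section BatchNoise.
Variables (R : realType) (N T B m n : nat) (mu : 'cV[R]_N) (P : 'M[R]_N)
  (Q : 'M[R]_(T, N)) (S : 'I_B -> sample N T) (f : sample N T -> 'M[R]_(m, n)).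

Lemma mulmx_batch_noise_eq0 k (L : 'M[R]_(k, m)) :
  (forall s, L *m f s = 0) -> L *m (batch_avg S f - Edata mu P Q f) = 0.
Proof.
move=> Lf0; rewrite /batch_avg /Edata mulmxBr -scalemxAr !mulmx_sumr.
rewrite big1 ?scaler0 ?sub0r => [|b _]; last exact: Lf0.
by rewrite big1 ?oppr0 // => s _; rewrite -scalemxAr Lf0 scaler0.
Qed.

Lemma batch_noise_mulmx_eq0 k (M : 'M[R]_(n, k)) :
  (forall s, f s *m M = 0) -> (batch_avg S f - Edata mu P Q f) *m M = 0.
Proof.
move=> fM0; rewrite /batch_avg /Edata mulmxBl -scalemxAl !mulmx_suml.
rewrite big1 ?scaler0 ?sub0r => [|b _]; last exact: fM0.
by rewrite big1 ?oppr0 // => s _; rewrite -scalemxAl fM0 scaler0.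
Qed.

End BatchNoise.

Section ResidualRecursion.
Variables (R : realType) (N T : nat) (mu : 'cV[R]_N) (P V : 'M[R]_N) (Q A : 'M[R]_(T, N)).
Hypotheses (mu_gt0 : forall i, 0 < mu i 0) (mu_sum1 : \sum_i mu i 0 = 1)
  (P_colsum1 : onesr R N *m P = onesr R N) (Q_colsum1 : onesr R T *m Q = onesr R N)
  (V_colsum1 : onesr R N *m V = onesr R N) (A_colsum1 : onesr R T *m A = onesr R N)
  (P_mu : P *m mu = mu) (V_mu : V *m mu = mu)
  (K_P_gt0 : 0 < K_P mu P) (K_Q_gt0 : 0 < K_Q mu Q).

Local Notation J := (const_mx (T%:R^-1) : 'M[R]_(T, N)).
Local Notation M := (mu *m onesr R N).

Let DeltaA_resid X : DeltaA mu Q X = affine_resid mu Q J T%:R^-1 X. Proof. by []. Qed.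
Let DeltaV_resid X : DeltaV mu P X = affine_resid mu P M (sqnorm mu) X. Proof. by []. Qed.

Let KQ_neq0 : nrm_mu mu Q - T%:R^-1 != 0. Proof. exact: lt0r_neq0. Qed.
Let KP_neq0 : nrm_mu mu P - sqnorm mu != 0. Proof. exact: lt0r_neq0. Qed.

Let ip_mu_J X : onesr R T *m X = onesr R N -> ip_mu mu X J = T%:R^-1.
Proof.
move=> X_colsum1; rewrite ip_mu_const -[RHS]mulr1 -mu_sum1; congr (_ * _).
by apply: eq_bigr => k _; rewrite -ones_mulmxE X_colsum1 mxE mulr1.
Qed.

Let ip_mu_M X : X *m mu = mu -> ip_mu mu X M = sqnorm mu.
Proof.
by move=> Xmu; rewrite ip_mu_mul_ones /sqnorm; apply: eq_bigr => i _; rewrite Xmu expr2.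
Qed.

Let AJ : ip_mu mu A J = T%:R^-1. Proof. exact: ip_mu_J. Qed.
Let QJ : ip_mu mu Q J = T%:R^-1. Proof. exact: ip_mu_J. Qed.
Let JJ : ip_mu mu J J = T%:R^-1.
Proof.
apply: ip_mu_J; apply/matrixP => i k; rewrite (ord1 i) ones_mulmxE mxE.
under eq_bigr do rewrite mxE.
by rewrite sumr_const card_ord -[_ *+ T]mulr_natr mulVf // (K_Q_gt0_T_neq0 K_Q_gt0).
Qed.

Let VM : ip_mu mu V M = sqnorm mu. Proof. exact: ip_mu_M. Qed.
Let PM : ip_mu mu P M = sqnorm mu. Proof. exact: ip_mu_M. Qed.
Let MM : ip_mu mu M M = sqnorm mu.
Proof. by apply: ip_mu_M; rewrite -mulmxA ones_mul_mu // mulmx1. Qed.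

Lemma nrm_DeltaA_step (eta : R) (h : 'M[R]_(T, N)) : onesr R T *m h = 0 ->
  let cA := 1 - eta * K_P mu P * alphaV mu P V ^+ 2 - eta * nrm_mu mu (DeltaV mu P V) in
  nrm_mu mu (DeltaA mu Q (A - eta *: (Edata mu P Q (pgradA mu V A) + h))) =
  cA ^+ 2 * nrm_mu mu (DeltaA mu Q A) - 2 * eta * cA * ip_mu mu (DeltaA mu Q A) h
  - eta ^+ 2 / K_Q mu Q * ip_mu mu h Q ^+ 2 + eta ^+ 2 * nrm_mu mu h.
Proof.
move=> h_colsum0 cA.
have hJ : ip_mu mu h J = 0.
  rewrite ip_mu_const big1 ?mulr0 // => k _.
  by rewrite -ones_mulmxE h_colsum0 mxE mulr0.
have -> : cA = 1 - eta * (nrm_mu mu V - sqnorm mu).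
  by rewrite /cA (nrm_mu_affine_resid PM MM KP_neq0 VM) /alphaV /K_P; ring.
by rewrite mean_pgradA // !DeltaA_resid nrm_mu_affine_resid_step.
Qed.

Lemma nrm_DeltaV_step (eta : R) (h : 'M[R]_N) : h *m mu = 0 ->
  let cV := 1 - eta * (alphaA mu Q A ^+ 2 * K_Q mu Q + T%:R^-1)
              - eta * nrm_mu mu (DeltaA mu Q A) in
  nrm_mu mu (DeltaV mu P (V - eta *: (Edata mu P Q (pgradV mu V A) + h))) =
  cV ^+ 2 * nrm_mu mu (DeltaV mu P V) - 2 * eta * cV * ip_mu mu (DeltaV mu P V) h
  - eta ^+ 2 / K_P mu P * ip_mu mu P h ^+ 2 + eta ^+ 2 * nrm_mu mu h.
Proof.
move=> h_mu0 cV.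
have hM : ip_mu mu h M = 0.
  by rewrite ip_mu_mul_ones big1 // => i _; rewrite h_mu0 mxE mulr0.
have -> : cV = 1 - eta * nrm_mu mu A.
  by rewrite /cV (nrm_mu_affine_resid QJ JJ KQ_neq0 AJ) /alphaA /K_Q; ring.
by rewrite mean_pgradV // !DeltaV_resid nrm_mu_affine_resid_step // (ip_muC mu P).
Qed.

End ResidualRecursion.

Unset Implicit Arguments. Set Strict Implicit.

Theorem lemmaC6 (R : realType) (N T B : nat)
  (mu : 'cV[R]_N) (P : 'M[R]_N) (Q : 'M[R]_(T, N))
  (V : 'M[R]_N) (A : 'M[R]_(T, N)) (etaV etaA : R)
  (S : 'I_B -> sample N T) :
  (forall i, 0 < mu i 0) -> \sum_i mu i 0 = 1 ->
  (forall i j, 0 <= P i j) -> onesr R N *m P = onesr R N -> P *m mu = mu ->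
  (forall t k, 0 <= Q t k) -> onesr R T *m Q = onesr R N ->
  0 < K_P mu P -> 0 < K_Q mu Q ->
  onesr R N *m V = onesr R N -> onesr R T *m A = onesr R N -> V *m mu = mu ->
  (0 < B)%N ->
  let EgV := Edata mu P Q (pgradV mu V A) in
  let EgA := Edata mu P Q (pgradA mu V A) in
  let hV := batch_avg S (pgradV mu V A) - EgV in
  let hA := batch_avg S (pgradA mu V A) - EgA in
  let V' := V - etaV *: (EgV + hV) in
  let A' := A - etaA *: (EgA + hA) in
  let aV := alphaV mu P V in
  let aA := alphaA mu Q A in
  let DV := DeltaV mu P V in
  let DA := DeltaA mu Q A in
  let cA := 1 - etaA * K_P mu P * aV ^+ 2 - etaA * nrm_mu mu DV in
  let cV := 1 - etaV * (aA ^+ 2 * K_Q mu Q + T%:R^-1) - etaV * nrm_mu mu DA in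
  nrm_mu mu (DeltaA mu Q A') =
    cA ^+ 2 * nrm_mu mu DA - 2 * etaA * cA * ip_mu mu DA hA
    - etaA ^+ 2 / K_Q mu Q * (ip_mu mu hA Q) ^+ 2 + etaA ^+ 2 * nrm_mu mu hA
  /\
  nrm_mu mu (DeltaV mu P V') =
    cV ^+ 2 * nrm_mu mu DV - 2 * etaV * cV * ip_mu mu DV hV
    - etaV ^+ 2 / K_P mu P * (ip_mu mu P hV) ^+ 2 + etaV ^+ 2 * nrm_mu mu hV.
Proof.
move=> mu_gt0 mu_sum1 _ P_colsum1 P_mu _ Q_colsum1 KP_gt0 KQ_gt0 V_colsum1 A_colsum1 V_mu _.
split.
  apply: nrm_DeltaA_step => //; apply: mulmx_batch_noise_eq0 => s.
  exact/ones_mul_pgradA/(K_Q_gt0_T_neq0 KQ_gt0).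
apply: nrm_DeltaV_step => //; apply: batch_noise_mulmx_eq0 => s.
exact/pgradV_mul_mu/lt0r_neq0/sqnorm_gt0.
Qed.
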